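(* Let $n\ge 1$, $V=\{0,1\}^n$, $\mu$ the uniform probability measure on $V$, and $\beta=\log_2(3/2)$. For every $A\subseteq V$, \[ \int h_A^\beta\, d\mu \;\ge\; 2\,\mu(A)\bigl(1-\mu(A)\bigr). \]
   Context: $Q_n$ is the Hamming cube with vertex set $V=\{0,1\}^n$, two vertices adjacent iff they differ in exactly one coordinate. For $T\subseteq V$ and $x\in V$, $d_T(x)$ denotes the number of neighbors of $x$ in $T$. For $S\subseteq V$, $h_S:V\to\mathbb N$ is defined by $h_S(x)=d_{V\setminus S}(x)$ if $x\in S$ and $h_S(x)=0$ if $x\notin S$. For $f:V\to\mathbb R$ and $X\subseteq V$, $\int_X f\,d\mu=\sum_{x\in X}f(x)\mu(x)$ and $\int=\int_V$. Here $0^\beta=0$. *)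

From HB Require Import structures.
From mathcomp Require Import all_boot.
From Stdlib Require Import Reals.
Set Implicit Arguments. Unset Strict Implicit. Unset Printing Implicit Defensive.

Definition cube (n : nat) : finType := {ffun 'I_n -> bool}.

Definition adj (n : nat) (x y : cube n) : bool :=
  #|[set i : 'I_n | x i != y i]| == 1%N.

Definition deg (n : nat) (T : {set cube n}) (x : cube n) : nat :=
  #|[set y : cube n | adj x y & y \in T]|.

Definition hS (n : nat) (S : {set cube n}) (x : cube n) : nat :=
  if x \in S then deg (~: S) x else 0%N.

(* real power with the convention 0^b = 0 (used for x >= 0) *)
Definition rpow0 (x b : R) : R :=
  if Req_EM_T x 0 then 0%R else Rpower x b.

Definition mu (n : nat) (x : cube n) : R := (/ (2 ^ n))%R.

Definition integral (n : nat) (f : cube n -> R) : R :=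
  foldr Rplus 0%R (map (fun x => (f x * mu x)%R) (enum (cube n))).

Definition muS (n : nat) (A : {set cube n}) : R :=
  integral (fun x : cube n => if x \in A then 1%R else 0%R).

Definition beta : R := (ln (3/2) / ln 2)%R.

From HB Require Import structures.
From mathcomp Require Import all_boot.
From Stdlib Require Import Reals Lra.
Set Implicit Arguments. Unset Strict Implicit. Unset Printing Implicit Defensive.

(* The power h ^ beta is bounded below by its piecewise linear interpolation
   psi at the powers of 2 (concavity), and psi satisfies psi 0 = 0, psi 1 = 1
   and psi u * (psi (u + 1) - psi u) >= 1/2 for u >= 1.  With
   E(A) = sum_x psi (h_A x) one shows 2 |A| (2^n - |A|) <= 2^n E(A) by
   induction on n.  Split the cube along the first coordinate into slices
   A0, A1 with |A1| <= |A0|: on each slice h_A is h of the slice, plus 1 at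
   the at least |A0| - |A1| points of A0 whose neighbour across lies outside
   A.  The increment property of psi converts these extra boundary edges into
   the term 2 (|A0| - |A1|)^2 by which the induction hypotheses for A0 and A1
   fall short. *)

HB.instance Definition _ :=
  Monoid.isComLaw.Build R 0%R Rplus (fun a b c => esym (Rplus_assoc a b c)) Rplus_comm Rplus_0_l.

Notation "\rsum_ ( i : T ) F" := (\big[Rplus/0%R]_(i : T) F%R)
  (at level 41, F at level 41, i, T at level 50).

Section RealSums.
Local Open Scope R_scope.
Variable T : finType.
Implicit Types F G : T -> R.

Lemma rsum_le F G : (forall x, F x <= G x) -> \rsum_(x : T) F x <= \rsum_(x : T) G x.
Proof. by move=> FG; apply: (big_ind2 (fun a b => a <= b)) => //; [lra | move=> *; lra]. Qed.

Lemma rsum_ge0 F : (forall x, 0 <= F x) -> 0 <= \rsum_(x : T) F x.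
Proof. by move=> F0; apply: (big_ind (fun a => 0 <= a)) => //; [lra | move=> *; lra]. Qed.

Lemma rsum_mull c F : \rsum_(x : T) (c * F x) = c * \rsum_(x : T) F x.
Proof. by apply: (big_ind2 (fun a b => a = c * b)) => [|? ? ? ? -> ->|//]; ring. Qed.

Lemma rsum_INR (f : T -> nat) : \rsum_(x : T) INR (f x) = INR (\sum_(x : T) f x).
Proof. by symmetry; apply: (big_morph INR) => // m k; apply: plus_INR. Qed.

End RealSums.

Lemma sum_mem_card (T : finType) (A : {pred T}) : \sum_(x : T) (x \in A : nat) = #|A|.
Proof. by rewrite -sum1_card [RHS]big_mkcond; apply: eq_bigr => x _; case: (x \in A). Qed.

Lemma rsum_mem_card (T : finType) (A : {pred T}) :
  \rsum_(x : T) (if x \in A then 1 else 0)%R = INR #|A|.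
Proof. by rewrite -sum_mem_card -rsum_INR; apply: eq_bigr => x _; case: (x \in A). Qed.

Section CubeCons.
Variable n : nat.

Definition cube_cons (b : bool) (y : cube n) : cube n.+1 :=
  [ffun i => if unlift ord0 i is Some j then y j else b].

Lemma cube_cons0 b y : cube_cons b y ord0 = b.
Proof. by rewrite ffunE unlift_none. Qed.

Lemma cube_consS b y j : cube_cons b y (lift ord0 j) = y j.
Proof. by rewrite ffunE liftK. Qed.

Lemma big_cube_cons (R0 : Type) (idx : R0) (op : Monoid.com_law idx) (F : cube n.+1 -> R0) :
  \big[op/idx]_(x : cube n.+1) F x =
  \big[op/idx]_(b : bool) \big[op/idx]_(y : cube n) F (cube_cons b y).
Proof.
rewrite pair_big (reindex (fun p : bool * cube n => cube_cons p.1 p.2)) //=.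
exists (fun x => (x ord0, [ffun j => x (lift ord0 j)])) => [[b y] _|x _] /=.
  by rewrite cube_cons0; congr pair; apply/ffunP => j; rewrite ffunE cube_consS.
apply/ffunP => i; rewrite ffunE; case: unliftP => [j ->|->] //.
by rewrite ffunE.
Qed.

Lemma card_neq_cube_cons b c y w :
  #|[set i | cube_cons b y i != cube_cons c w i]| = (b != c) + #|[set j | y j != w j]|.
Proof.
rewrite -!sum_mem_card big_ord_recl !inE !cube_cons0; congr (_ + _).
by apply: eq_bigr => j _; rewrite !inE !cube_consS.
Qed.

Lemma adj_cube_cons b c y w :
  adj (cube_cons b y) (cube_cons c w) = if b == c then adj y w else y == w.
Proof.
rewrite /adj card_neq_cube_cons.
case: (eqVneq b c) => /= _ //; rewrite add1n eqSS cards_eq0.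
apply/eqP/eqP => [yw0|->]; last by apply/setP => j; rewrite !inE eqxx.
by apply/ffunP => j; have := in_set0 j; rewrite -yw0 inE => /negbFE/eqP.
Qed.

Definition slice (A : {set cube n.+1}) (b : bool) : {set cube n} :=
  [set y | cube_cons b y \in A].

Lemma card_slices (A : {set cube n.+1}) : #|A| = #|slice A true| + #|slice A false|.
Proof.
rewrite -!sum_mem_card big_cube_cons big_bool.
by congr (_ + _); apply: eq_bigr => y _; rewrite inE.
Qed.

Lemma deg_compl_cube_cons (A : {set cube n.+1}) b y :
  deg (~: A) (cube_cons b y) = deg (~: slice A b) y + (cube_cons (~~ b) y \notin A).
Proof.
rewrite /deg -!sum_mem_card big_cube_cons big_bool.
set out := [set z | _]; set out_slice := [set z | _].
have in_slice : \sum_(w : cube n) (cube_cons b w \in out : nat) =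
                \sum_(w : cube n) (w \in out_slice : nat).
  by apply: eq_bigr => w _; rewrite !inE adj_cube_cons eqxx.
have across : \sum_(w : cube n) (cube_cons (~~ b) w \in out : nat) =
              (cube_cons (~~ b) y \notin A).
  rewrite (bigD1 y) //= big1 ?addn0.
    by rewrite /out !inE adj_cube_cons; case: (b); rewrite /= eqxx.
  by move=> w yw; rewrite /out !inE adj_cube_cons; case: (b) => /=; rewrite eq_sym (negbTE yw).
clearbody out out_slice; by case: b in_slice across => /= -> ->; rewrite // addnC.
Qed.

Lemma hS_cube_cons (A : {set cube n.+1}) b y :
  hS A (cube_cons b y) = hS (slice A b) y + (y \in slice A b :\: slice A (~~ b)).
Proof.
rewrite /hS deg_compl_cube_cons !inE.
by case: (cube_cons b y \in A); rewrite ?andbT ?andbF.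
Qed.

End CubeCons.

Lemma card_cube_le n (A : {set cube n}) : #|A| <= expn 2 n.
Proof. by apply: leq_trans (max_card A) _; rewrite card_ffun card_bool card_ord. Qed.

Section Psi.
Local Open Scope R_scope.

Lemma INR_expn2 k : INR (expn 2 k) = 2 ^ k.
Proof. by elim: k => [|k IH] //=; rewrite expnS mult_INR IH. Qed.

(* On each dyadic segment [2^k, 2^(k+1)], psi is the chord of u ^ beta, which
   takes the values (3/2)^k and (3/2)^(k+1) at the endpoints. *)
Definition psi (u : nat) : R :=
  if u is 0%nat then 0 else
  let k := trunc_log 2 u in (3/2) ^ k * (1 + INR u / 2 ^ k) / 2.

Lemma psi_dyadic (k v : nat) : (expn 2 k <= v <= expn 2 k.+1)%nat ->
  psi v = (3/2) ^ k * (1 + INR v / 2 ^ k) / 2.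
Proof.
case: v => [|v] /andP[lo hi]; first by rewrite leqn0 expn_eq0 in lo.
rewrite /psi.
have pow2_gt0 : 0 < 2 ^ k by apply: pow_lt; lra.
case: (ltngtP v.+1 (expn 2 k.+1)) hi => // [lt_v _|eq_v _].
  by rewrite (@trunc_log_eq 2 k) // lo lt_v.
rewrite eq_v trunc_expnK // INR_expn2 /=; field; lra.
Qed.

Lemma psi1 : psi 1 = 1.
Proof. by rewrite (@psi_dyadic 0) //=; field. Qed.

Section PsiPositive.
Variable u : nat.
Hypothesis u_gt0 : (0 < u)%nat.
Let k := trunc_log 2 u.

Let pow2_gt0 : 0 < 2 ^ k.
Proof. by apply: pow_lt; lra. Qed.

Let k_bounds : (expn 2 k <= u < expn 2 k.+1)%nat.
Proof. exact: trunc_log_bounds. Qed.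

Lemma psi_ge_pow : (3/2) ^ k <= psi u.
Proof.
have [lo hi] := andP k_bounds.
rewrite (psi_dyadic (introT andP (conj lo (ltnW hi)))).
have : 2 ^ k <= INR u by rewrite -INR_expn2; apply/le_INR/leP.
have : 1 <= (3/2) ^ k by apply: pow_R1_Rle; lra.
move=> pow32_ge1 pow2_le; have : 1 <= INR u / 2 ^ k.
  by apply: (Rmult_le_reg_r (2 ^ k)) => //; field_simplify; lra.
nra.
Qed.

Lemma psiS : psi u.+1 = psi u + (3/2) ^ k / (2 * 2 ^ k).
Proof.
have [lo hi] := andP k_bounds.
rewrite (psi_dyadic (introT andP (conj lo (ltnW hi)))).
rewrite (@psi_dyadic k u.+1) ?(leqW lo) // S_INR; field; lra.
Qed.

Lemma psi_ge1 : 1 <= psi u.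
Proof.
have : 1 <= (3/2) ^ k by apply: pow_R1_Rle; lra.
by have := psi_ge_pow; lra.
Qed.

Lemma psi_mul_incr : 1/2 <= psi u * (psi u.+1 - psi u).
Proof.
rewrite psiS; have := psi_ge_pow; set p := psi u => p_ge.
have : 1 <= (3/2) ^ k * (3/2) ^ k / 2 ^ k.
  rewrite -Rpow_mult_distr; apply: (Rmult_le_reg_r (2 ^ k)) => //.
  by field_simplify; [apply: pow_incr; lra | lra].
have incr_ge0 : 0 <= (3/2) ^ k / (2 * 2 ^ k).
  by apply: Rmult_le_pos; [apply: pow_le; lra | apply/Rlt_le/Rinv_0_lt_compat; lra].
have -> : p + (3/2) ^ k / (2 * 2 ^ k) - p = (3/2) ^ k / (2 * 2 ^ k) by ring.
have -> : (3/2) ^ k * (3/2) ^ k / 2 ^ k = 2 * ((3/2) ^ k * ((3/2) ^ k / (2 * 2 ^ k))).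
  by field; lra.
nra.
Qed.

End PsiPositive.

Lemma psi_incr_lower (T : R) u : 0 <= T <= 1 ->
  T <= psi u.+1 - psi u + T ^ 2 / 2 * psi u.
Proof.
case: u => [|u] T01; first by rewrite psi1 /=; lra.
have p_ge1 := psi_ge1 (ltn0Sn u); have key := psi_mul_incr (ltn0Sn u).
move: p_ge1 key; set p := psi u.+1; set q := psi u.+2 => p_ge1 key.
(* AM-GM: the increment is at least 1/(2p), and 1/(2p) + T^2 p/2 >= T. *)
apply: (Rmult_le_reg_l p); first lra.
have := pow2_ge_0 (1 - T * p); nra.
Qed.

Lemma psi_mono u v : (u <= v)%nat -> psi u <= psi v.
Proof.
move/subnK <-; elim: (v - u)%nat => [|d IH]; first by rewrite add0n; lra.
have := psi_incr_lower (d + u) (conj (Rle_refl 0) Rle_0_1).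
rewrite addSn; lra.
Qed.

Lemma psi_ge0 u : 0 <= psi u.
Proof. exact: (psi_mono (leq0n u)). Qed.

End Psi.

Section ConcavePower.
Local Open Scope R_scope.

Lemma Rpower_le_bernoulli z b : 0 < z -> 0 <= b <= 1 -> Rpower z b <= 1 + b * (z - 1).
Proof.
move=> z_gt0 b01; set m := 1 + b * (z - 1).
have m_gt0 : 0 < m by rewrite /m; nra.
have ln_le t : 0 < t -> ln t <= t - 1.
  by move=> t_gt0; have := exp_ineq1_le (ln t); rewrite exp_ln //; lra.
have zm_gt0 : 0 < z * / m by apply: Rmult_lt_0_compat => //; apply: Rinv_0_lt_compat.
have im_gt0 : 0 < / m by apply: Rinv_0_lt_compat.
(* Average ln t <= t - 1 at t = z/m and t = 1/m with weights b and 1 - b. *)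
have ln_zm := ln_le _ zm_gt0; have ln_im := ln_le _ im_gt0.
rewrite ln_mult // ln_Rinv // in ln_zm; rewrite ln_Rinv // in ln_im.
have weights : b * (z * / m - 1) + (1 - b) * (/ m - 1) = 0 by rewrite /m; field; rewrite -/m; lra.
have exponent_le : b * ln z <= ln m.
  have := Rmult_le_compat_l b _ _ (proj1 b01) ln_zm.
  have := Rmult_le_compat_l (1 - b) _ _ (ltac:(lra) : 0 <= 1 - b) ln_im.
  lra.
rewrite /Rpower -(exp_ln m) //.
by case: (Rle_lt_or_eq_dec _ _ exponent_le) => [/exp_increasing/Rlt_le|->] //; apply: Rle_refl.
Qed.

Lemma beta_ln2 : beta * ln 2 = ln (3/2).
Proof.
have ln2_gt0 : 0 < ln 2 by rewrite -ln_1; apply: ln_increasing; lra.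
by rewrite /beta; field; lra.
Qed.

Lemma beta01 : 0 <= beta <= 1.
Proof.
have ln2_gt0 : 0 < ln 2 by rewrite -ln_1; apply: ln_increasing; lra.
have ln32_gt0 : 0 < ln (3/2) by rewrite -ln_1; apply: ln_increasing; lra.
have ln32_lt : ln (3/2) < ln 2 by apply: ln_increasing; lra.
have := beta_ln2; split; nra.
Qed.

Lemma Rpower_pow2_beta k : Rpower (2 ^ k) beta = (3/2) ^ k.
Proof.
rewrite -!Rpower_pow; try lra.
by rewrite Rpower_mult /Rpower Rmult_assoc beta_ln2.
Qed.

(* Concavity of x ^ beta on [1, 2]: combine the tangent bounds at x evaluated
   at 1 and 2 with weights 2 - x and x - 1. *)
Lemma Rpower_beta_ge_chord x : 1 <= x <= 2 -> (1 + x) / 2 <= Rpower x beta.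
Proof.
move=> x12; set X := Rpower x beta.
have X_gt0 : 0 < X by apply: exp_pos.
have ix_gt0 : 0 < / x by apply: Rinv_0_lt_compat; lra.
have at_y y : 0 < y -> Rpower (y * / x) beta * X = Rpower y beta.
  move=> y_gt0; rewrite /X Rpower_mult_distr; try lra; last exact: Rmult_lt_0_compat.
  by rewrite Rmult_assoc Rinv_l ?Rmult_1_r //; lra.
have tangent y : 0 < y -> Rpower y beta <= X * (1 + beta * (y * / x - 1)).
  move=> y_gt0; rewrite -(at_y y y_gt0) Rmult_comm.
  apply: Rmult_le_compat_l; first lra.
  by apply: Rpower_le_bernoulli; [exact: Rmult_lt_0_compat | exact: beta01].
have at1 := tangent 1 Rlt_0_1; have at2 := tangent 2 Rlt_0_2.
rewrite /Rpower ln_1 Rmult_0_r exp_0 in at1.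
rewrite /Rpower beta_ln2 exp_ln in at2; last lra.
have combo : (2 - x) * (X * (1 + beta * (1 * / x - 1))) +
             (x - 1) * (X * (1 + beta * (2 * / x - 1))) = X by field; lra.
have := Rmult_le_compat_l (2 - x) _ _ (ltac:(lra) : 0 <= 2 - x) at1.
have := Rmult_le_compat_l (x - 1) _ _ (ltac:(lra) : 0 <= x - 1) at2.
lra.
Qed.

Lemma psi_le_rpow0 v : psi v <= rpow0 (INR v) beta.
Proof.
rewrite /rpow0; case: Req_EM_T => [v0|v_neq0] /=.
  by rewrite (INR_eq v 0 v0); apply: Rle_refl.
move: v_neq0; case: v => [|v] v_neq0; first by case: v_neq0.
have [lo hi] := andP (trunc_log_bounds (isT : (1 < 2)%nat) (ltn0Sn v)).
set k := trunc_log 2 v.+1 in lo hi.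
rewrite (@psi_dyadic k) ?lo ?(ltnW hi) //.
have pow2_gt0 : 0 < 2 ^ k by apply: pow_lt; lra.
set x := INR v.+1 / 2 ^ k.
have x12 : 1 <= x <= 2.
  rewrite /x; split; apply: (Rmult_le_reg_r (2 ^ k)) => //; field_simplify; try lra.
    by rewrite -INR_expn2; apply/le_INR/leP.
  by rewrite -[2 * 2 ^ k]/(2 ^ k.+1) -INR_expn2; apply/le_INR/leP/ltnW.
have -> : INR v.+1 = 2 ^ k * x by rewrite /x; field; lra.
rewrite -Rpower_mult_distr ?Rpower_pow2_beta; try lra.
have := Rpower_beta_ge_chord x12; have : 1 <= (3/2) ^ k by apply: pow_R1_Rle; lra.
nra.
Qed.

End ConcavePower.

Section Energy.
Local Open Scope R_scope.

Definition energy n (A : {set cube n}) : R := \rsum_(x : cube n) psi (hS A x).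

Definition shifted_energy n (A B : {set cube n}) : R :=
  \rsum_(x : cube n) psi (hS A x + (x \in B)).

Lemma energy_ge0 n (A : {set cube n}) : 0 <= energy A.
Proof. by apply: rsum_ge0 => x; apply: psi_ge0. Qed.

Lemma energy_le_shifted n (A B : {set cube n}) : energy A <= shifted_energy A B.
Proof. by apply: rsum_le => x; apply/psi_mono/leq_addr. Qed.

Lemma shifted_energy_ge n (A B : {set cube n}) T : 0 <= T <= 1 ->
  (1 - T ^ 2 / 2) * energy A + T * INR #|B| <= shifted_energy A B.
Proof.
move=> T01; rewrite -rsum_mem_card -!rsum_mull -big_split /=.
apply: rsum_le => x; have := psi_ge0 (hS A x); have := psi_incr_lower (hS A x) T01.
by case: (x \in B); rewrite ?addn1 ?addn0 /=; nra.
Qed.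

Lemma energy_cube_cons n (A : {set cube n.+1}) :
  let A0 := slice A true in let A1 := slice A false in
  energy A = shifted_energy A0 (A0 :\: A1) + shifted_energy A1 (A1 :\: A0).
Proof.
rewrite /energy big_cube_cons big_bool.
by congr Rplus; apply: eq_bigr => y _; rewrite hS_cube_cons.
Qed.

Lemma crossing_weight (N d k : R) : 0 < N -> 0 <= d <= k -> k <= N ->
  exists2 T, 0 <= T <= 1 & d ^ 2 + T ^ 2 * (k * (N - k)) <= N * d * T.
Proof.
move=> N_gt0 dk kN; case: (Rle_lt_dec (2 * d) N) => [small|large].
  exists (2 * d / N).
    split; last by apply: (Rmult_le_reg_r N) => //; field_simplify; lra.
    by apply: Rmult_le_pos; [lra | apply/Rlt_le/Rinv_0_lt_compat].
  have frac : 4 * (k * (N - k)) / N ^ 2 <= 1.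
    apply: (Rmult_le_reg_r (N ^ 2)); first nra.
    by field_simplify; [have := pow2_ge_0 (N - 2 * k); nra | lra].
  have -> : (2 * d / N) ^ 2 * (k * (N - k)) = d ^ 2 * (4 * (k * (N - k)) / N ^ 2).
    by field; lra.
  have -> : N * d * (2 * d / N) = 2 * d ^ 2 by field; lra.
  by have := pow2_ge_0 d; nra.
exists 1; first lra.
have : 0 <= (k - d) * (k + d - N) by apply: Rmult_le_pos; lra.
nra.
Qed.

Section InductionStep.
Variable n : nat.
Hypothesis energy_bound : forall A : {set cube n},
  2 * INR #|A| * (2 ^ n - INR #|A|) <= energy A * 2 ^ n.

Lemma energy_slices_bound (A0 A1 : {set cube n}) : (#|A1| <= #|A0|)%nat ->
  2 * (INR #|A0| + INR #|A1|) * (2 * 2 ^ n - (INR #|A0| + INR #|A1|)) <=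
  (shifted_energy A0 (A0 :\: A1) + shifted_energy A1 (A1 :\: A0)) * (2 * 2 ^ n).
Proof.
move=> le_card; set N := 2 ^ n; set k0 := INR #|A0|; set k1 := INR #|A1|.
have N_gt0 : 0 < N by apply: pow_lt; lra.
have k0_le : k0 <= N by rewrite /N -INR_expn2; apply/le_INR/leP/card_cube_le.
have k1_le : k1 <= k0 by apply/le_INR/leP.
have k1_ge0 : 0 <= k1 by apply: pos_INR.
have card_diff : k0 - k1 <= INR #|A0 :\: A1|.
  rewrite /k0 /k1 -(cardsID A1 A0) plus_INR.
  have : (#|A0 :&: A1| <= #|A1|)%nat by apply/subset_leq_card/subsetIr.
  by move/leP/le_INR; lra.
have d_bounds : 0 <= k0 - k1 <= k0 by lra.
have [T T01 weight] := crossing_weight N_gt0 d_bounds k0_le.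
have E0 := shifted_energy_ge A0 (A0 :\: A1) T01.
have E1 := energy_le_shifted A1 (A1 :\: A0).
have I0 := energy_bound A0; have I1 := energy_bound A1.
rewrite -/N -/k0 -/k1 in I0 I1.
move: E0 E1; set s0 := shifted_energy A0 _; set s1 := shifted_energy A1 _ => E0 E1.
have P1 : 0 <= (1 - T ^ 2 / 2) * (energy A0 * N - 2 * k0 * (N - k0)).
  by apply: Rmult_le_pos; nra.
have P2 : 0 <= T * N * (INR #|A0 :\: A1| - (k0 - k1)) by apply: Rmult_le_pos; nra.
have P3 : 0 <= (s0 + s1 -
                ((1 - T ^ 2 / 2) * energy A0 + T * INR #|A0 :\: A1| + energy A1)) * N.
  by apply: Rmult_le_pos; lra.
lra.
Qed.

End InductionStep.

Lemma energy_lower_bound n (A : {set cube n}) :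
  2 * INR #|A| * (2 ^ n - INR #|A|) <= energy A * 2 ^ n.
Proof.
elim: n A => [|n IH] A.
  have := card_cube_le A; have := energy_ge0 A; rewrite /= Rmult_1_r.
  by case: #|A| => [|[|//]] /= *; lra.
rewrite energy_cube_cons card_slices plus_INR /=.
case: (leqP #|slice A true| #|slice A false|) => [le_card|/ltnW le_card].
  by rewrite (Rplus_comm (INR _)) (Rplus_comm (shifted_energy _ _)); apply: energy_slices_bound.
by apply: energy_slices_bound.
Qed.

End Energy.

Lemma integral_cube n (f : cube n -> R) :
  integral f = ((\rsum_(x : cube n) f x) / 2 ^ n)%R.
Proof.
rewrite /integral foldrE big_map big_enum /= /Rdiv Rmult_comm -rsum_mull.
by apply: eq_bigr => x _; rewrite Rmult_comm.
Qed.

Lemma muS_card n (A : {set cube n}) : muS A = (INR #|A| / 2 ^ n)%R.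
Proof. by rewrite /muS integral_cube rsum_mem_card. Qed.

Theorem theorem1p1 (n : nat) (Hn : (1 <= n)%N) (A : {set cube n}) :
  (integral (fun x : cube n => rpow0 (INR (hS A x)) beta)
     >= 2 * muS A * (1 - muS A))%R.
Proof.
apply: Rle_ge; rewrite integral_cube muS_card.
have N_gt0 : (0 < 2 ^ n)%R by apply: pow_lt; lra.
have energy_le : (energy A <= \rsum_(x : cube n) rpow0 (INR (hS A x)) beta)%R.
  by apply: rsum_le => x; apply: psi_le_rpow0.
apply: Rle_trans (Rmult_le_compat_r _ _ _ (Rlt_le _ _ (Rinv_0_lt_compat _ N_gt0)) energy_le).
have inv_ge0 := Rlt_le _ _ (Rinv_0_lt_compat _ N_gt0).
have -> : (2 * (INR #|A| / 2 ^ n) * (1 - INR #|A| / 2 ^ n) =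
          2 * INR #|A| * (2 ^ n - INR #|A|) / 2 ^ n / 2 ^ n)%R by field; lra.
have -> : (energy A * / 2 ^ n = energy A * 2 ^ n / 2 ^ n / 2 ^ n)%R by field; lra.
by do 2!apply: Rmult_le_compat_r => //; apply: energy_lower_bound.
Qed.
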